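(* Let $\mathfrak{S}=(\mathcal{X},\mathsf{S},\gamma,(\Lambda_{a})_{a\in\mathcal{A}})$ be a spectral decomposition system for the Euclidean space $\mathfrak{H}$, let $\varphi\colon\mathcal{X}\to\left]-\infty,+\infty\right]$ be proper and $\mathsf{S}$-invariant, and let $Y\in\mathfrak{H}$. Set $\mathcal{M}=\operatorname{Argmin}(\varphi\circ\gamma-\langle\cdot,Y\rangle)$ and $M=\operatorname{Argmin}(\varphi-\langle\cdot,\gamma(Y)\rangle)$. Then: (i) $\inf_{X\in\mathfrak{H}}\big(\varphi(\gamma(X))-\langle X,Y\rangle\big)=\inf_{x\in\mathcal{X}}\big(\varphi(x)-\langle x,\gamma(Y)\rangle\big)$; (ii) for every $X\in\mathfrak{H}$: $X\in\mathcal{M}$ if and only if $\gamma(X)\in M$ and there exists $a\in\mathcal{A}$ such that $X=\Lambda_a\gamma(X)$ and $Y=\Lambda_a\gamma(Y)$; (iii) for every $x\in\mathcal{X}$ and every $b\in\mathcal{A}_Y$: $\Lambda_bx\in\mathcal{M}$ if and only if $x\in M$; (iv) $\mathcal{M}=\{\Lambda_bx : x\in M,\ b\in\mathcal{A}_Y\}$; (v) $\mathcal{M}$ is convex if and only if $M$ is convex; (vi) $\mathcal{M}$ is a singleton if and only if $M$ is a singleton.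
   Context: A Euclidean space is a finite-dimensional real inner product space; inner products are written $\langle\cdot,\cdot\rangle$ and norms $\|\cdot\|$. Let $\mathfrak{H}$ and $\mathcal{X}$ be Euclidean spaces, let $\mathsf{S}$ be a group acting on $\mathcal{X}$ by linear isometries, let $\gamma\colon\mathfrak{H}\to\mathcal{X}$, and let $(\Lambda_a)_{a\in\mathcal{A}}$ be a family of linear operators from $\mathcal{X}$ to $\mathfrak{H}$. The orbit of $x$ is $\mathsf{S}\cdot x=\{s\cdot x: s\in\mathsf{S}\}$; a map $f$ on $\mathcal{X}$ is $\mathsf{S}$-invariant if $f(s\cdot x)=f(x)$ for all $s,x$. The tuple is a spectral decomposition system for $\mathfrak{H}$ if: [A] every $\Lambda_a$ is an isometry; [B] there exists an $\mathsf{S}$-invariant $\tau\colon\mathcal{X}\to\mathcal{X}$ with $\tau(x)\in\mathsf{S}\cdot x$ for all $x$ and $\gamma\circ\Lambda_a=\tau$ for all $a$; [C] for every $X\in\mathfrak{H}$ there is $a$ with $X=\Lambda_a\gamma(X)$; [D] $\langle X,Y\rangle\leq\langle\gamma(X),\gamma(Y)\rangle$ for all $X,Y\in\mathfrak{H}$. For $X\in\mathfrak{H}$, $\mathcal{A}_X=\{a\in\mathcal{A}: X=\Lambda_a\gamma(X)\}$. A function is proper if it never takes $-\infty$ and is finite somewhere. For $g\colon\mathcal{H}\to\left]-\infty,+\infty\right]$, $\operatorname{Argmin}g=\{x: g(x)=\inf g(\mathcal{H})\}$ if $\inf g(\mathcal{H})<+\infty$, and $\operatorname{Argmin}g=\varnothing$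 otherwise. *)

From HB Require Import structures.
From mathcomp Require Import all_boot all_order all_algebra.
From mathcomp Require Import all_classical all_reals all_analysis.
Set Implicit Arguments. Unset Strict Implicit. Unset Printing Implicit Defensive.
Import Order.TTheory GRing.Theory Num.Theory.
Local Open Scope classical_set_scope.
Local Open Scope ring_scope.

Definition inner_product (R : realType) (V : lmodType R) (ip : V -> V -> R) :=
  [/\ (forall x y, ip x y = ip y x),
      (forall a x y z, ip (a *: x + y) z = a * ip x z + ip y z),
      (forall x, 0 <= ip x x) &
      (forall x, ip x x = 0 -> x = 0)].

(* A Euclidean space is a finite-dimensional real inner product space:
   modelled as a vectType R (finite-dimensional) together with an inner
   product [ip] satisfying [inner_product ip]. *)

Definition ipnorm (R : realType) (V : lmodType R) (ip : V -> V -> R) (x : V) : R :=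
  Num.sqrt (ip x x).

Definition group_action_by_linear_isometries (R : realType) (V : lmodType R)
  (ip : V -> V -> R) (S : Type) (mul : S -> S -> S) (one : S) (inv : S -> S)
  (act : S -> V -> V) :=
  [/\
      (forall a b c, mul a (mul b c) = mul (mul a b) c),
      (forall a, mul one a = a /\ mul a one = a) &
      (forall a, mul (inv a) a = one /\ mul a (inv a) = one)] /\
  [/\
      (forall x, act one x = x),
      (forall s t x, act (mul s t) x = act s (act t x)),
      (forall s a x y, act s (a *: x + y) = a *: act s x + act s y) &
      (forall s x, ipnorm ip (act s x) = ipnorm ip x)].

Definition orbit (V : Type) (S : Type) (act : S -> V -> V) (x : V) : set V :=
  [set act s x | s in setT].

Definition S_invariant (V T : Type) (S : Type) (act : S -> V -> V) (f : V -> T) :=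
  forall s x, f (act s x) = f x.

Definition spectral_decomposition_system (R : realType) (H X : lmodType R)
  (ipH : H -> H -> R) (ipX : X -> X -> R) (S : Type) (act : S -> X -> X)
  (gamma : H -> X) (A : Type) (Lambda : A -> {linear X -> H}) :=
  [/\ (forall a x, ipnorm ipH (Lambda a x) = ipnorm ipX x),
      (exists tau : X -> X, [/\ S_invariant act tau,
                   (forall x, orbit act x (tau x)) &
                   (forall a x, gamma (Lambda a x) = tau x)]),
      (forall Z : H, exists a, Z = Lambda a (gamma Z)) &
      (* [D] *) (forall Z W : H, ipH Z W <= ipX (gamma Z) (gamma W))].

Definition A_of (R : realType) (H X : lmodType R) (gamma : H -> X) (A : Type)
  (Lambda : A -> {linear X -> H}) (Z : H) : set A :=
  [set a | Z = Lambda a (gamma Z)].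

Definition proper_fun (R : realType) (T : Type) (f : T -> \bar R) :=
  (forall x, f x != -oo%E) /\ (exists x, f x \is a fin_num).

Definition Argmin (R : realType) (T : Type) (g : T -> \bar R) : set T :=
  if (ereal_inf (range g) < +oo)%E then [set x | g x = ereal_inf (range g)]
  else set0.

Definition is_singleton (T : Type) (C : set T) := exists x, C = [set x].

(* Comparing the two objectives through [D] gives [phi (gamma Z) - <gamma Z, gamma Y>
   <= phi (gamma Z) - <Z, Y>], while [Lambda_b] with [b] in [A_Y] carries the
   objective on X to the one on H; this gives (i), (iii) and (iv).  Equality in
   [D] forces [Z] and [Y] to be decomposed by a common [Lambda_a], hence (ii).
   For (v), if [Z] is a convex combination of minimizers then [gamma Z] is
   majorized by the same combination [x] of their spectra, i.e.
   [<gamma Z, w> <= <x, tau w>] for all [w]; a separation argument in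
   coordinates shows that [gamma Z] is then a convex combination of points of
   the orbit of [x], and the equality [<Z, Y> = <x, gamma Y>] makes each of
   these points a minimizer.  Finally (vi) follows from (iii), the injectivity
   of [Lambda_b] and the strict convexity of the Euclidean norm. *)

From Pilot Require Import Defs.
From HB Require Import structures.
From mathcomp Require Import all_boot all_order all_algebra.
From mathcomp Require Import all_classical all_reals all_analysis.
From mathcomp Require Import ring lra.
Import Order.TTheory GRing.Theory Num.Theory.
Import numFieldNormedType.Exports.
Import VectorInternalTheory.
Local Open Scope classical_set_scope.
Local Open Scope ring_scope.
Local Open Scope convex_scope.
Set Implicit Arguments. Unset Strict Implicit. Unset Printing Implicit Defensive.

Section InnerProduct.
Variables (R : realType) (V : lmodType R) (ip : V -> V -> R).
Hypothesis ipP : inner_product ip.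

Lemma ipC x y : ip x y = ip y x.
Proof. by case: ipP. Qed.

Lemma ipPl a x y z : ip (a *: x + y) z = a * ip x z + ip y z.
Proof. by case: ipP. Qed.

Lemma ip0l z : ip 0 z = 0.
Proof. by have := ipPl 1 0 0 z; rewrite scaler0 addr0 mul1r; lra. Qed.

Lemma ipDl x y z : ip (x + y) z = ip x z + ip y z.
Proof. by rewrite -[x]scale1r ipPl mul1r scale1r. Qed.

Lemma ipZl a x z : ip (a *: x) z = a * ip x z.
Proof. by rewrite -[a *: x]addr0 ipPl ip0l addr0. Qed.

Lemma ipBl x y z : ip (x - y) z = ip x z - ip y z.
Proof. by rewrite ipDl -scaleN1r ipZl mulN1r. Qed.

Lemma ip0r z : ip z 0 = 0.
Proof. by rewrite ipC ip0l. Qed.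

Lemma ipDr x y z : ip z (x + y) = ip z x + ip z y.
Proof. by rewrite ipC ipDl !(ipC z). Qed.

Lemma ipZr a x z : ip z (a *: x) = a * ip z x.
Proof. by rewrite ipC ipZl ipC. Qed.

Lemma ipBr x y z : ip z (x - y) = ip z x - ip z y.
Proof. by rewrite ipC ipBl !(ipC z). Qed.

Lemma ip_suml m (F : 'I_m -> V) z : ip (\sum_i F i) z = \sum_i ip (F i) z.
Proof. by elim/big_rec2: _ => [|i y1 y2 _ <-]; [exact: ip0l | exact: ipDl]. Qed.

Lemma ip_ge0 x : 0 <= ip x x.
Proof. by case: ipP. Qed.

Lemma ip_le0 x : ip x x <= 0 -> x = 0.
Proof.
case: ipP => _ _ _ ip_eq0 xx; apply: ip_eq0.
by apply/eqP; rewrite eq_le xx ip_ge0.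
Qed.

Lemma ip_gt0 x : x != 0 -> 0 < ip x x.
Proof.
move=> x0; rewrite lt_neqAle ip_ge0 andbT eq_sym.
by apply: contra x0 => /eqP xx; apply/eqP/ip_le0; rewrite xx.
Qed.

Lemma ip_sqrD x y : ip (x + y) (x + y) = ip x x + 2 * ip x y + ip y y.
Proof. by rewrite !ipDl !ipDr (ipC y x); ring. Qed.

Lemma ip_sqrB x y : ip (x - y) (x - y) = ip x x - 2 * ip x y + ip y y.
Proof. by rewrite !ipBl !ipBr (ipC y x); ring. Qed.

Lemma ip_Cauchy_Schwarz x y : ip x y ^+ 2 <= ip x x * ip y y.
Proof.
have [->|y0] := eqVneq y 0; first by rewrite !ip0r expr0n mulr0.
have yy := ip_gt0 y0.
have := ip_ge0 (x - (ip x y / ip y y) *: y).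
rewrite ip_sqrB ipZr ipZl ipZr -(pmulr_lge0 _ yy).
set t := ip x y / ip y y.
have -> : (ip x x - 2 * (t * ip x y) + t * (t * ip y y)) * ip y y =
    ip x x * ip y y - ip x y ^+ 2 by rewrite /t; field; rewrite gt_eqF.
by rewrite subr_ge0.
Qed.

Lemma ip_descent w d : 0 < ip w w <= ip w d ->
  exists2 e, 0 < e <= 1 & ip (w - e *: d) (w - e *: d) < ip w w.
Proof.
move=> /andP[ww wd]; have dd : 0 < ip d d.
  by apply: ip_gt0; apply: contraTneq wd => ->; rewrite ip0r -ltNge.
pose e := Num.min 1 (ip w d / ip d d).
have e0 : 0 < e by rewrite lt_min ltr01 divr_gt0 //; lra.
have ed : e * ip d d <= ip w d by rewrite -ler_pdivlMr // ge_min lexx orbT.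
exists e; first by rewrite e0 ge_min lexx.
rewrite ip_sqrB ipZr ipZl ipZr.
have : e * (e * ip d d) <= e * ip w d by rewrite ler_wpM2l // ltW.
nra.
Qed.

Lemma ip_midpoint_eq x y : ip x x = ip y y ->
  ip (2^-1 *: (x + y)) (2^-1 *: (x + y)) = ip x x -> x = y.
Proof.
move=> xy mid; apply/eqP; rewrite -subr_eq0; apply/eqP/ip_le0.
by move: mid; rewrite ipZl ipZr ip_sqrD ip_sqrB -xy; lra.
Qed.

Local Notation N := (ipnorm ip).

Lemma ipnorm_ge0 x : 0 <= N x.
Proof. exact: sqrtr_ge0. Qed.

Lemma ipnorm_sqr x : N x ^+ 2 = ip x x.
Proof. by rewrite sqr_sqrtr // ip_ge0. Qed.

Lemma ipnorm0 : N 0 = 0.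
Proof. by rewrite /ipnorm ip0l sqrtr0. Qed.

Lemma ipnorm_eq0 x : N x = 0 -> x = 0.
Proof. by move=> h; apply: ip_le0; rewrite -ipnorm_sqr h expr0n. Qed.

Lemma ipnormZ a x : N (a *: x) = `|a| * N x.
Proof. by rewrite /ipnorm ipZl ipZr mulrA -expr2 sqrtrM ?sqr_ge0 // sqrtr_sqr. Qed.

Lemma ipnormN x : N (- x) = N x.
Proof. by rewrite -scaleN1r ipnormZ normrN normr1 mul1r. Qed.

Lemma ip_le_ipnorm x y : ip x y <= N x * N y.
Proof.
rewrite (le_trans (ler_norm _)) // -sqrtr_sqr -sqrtrM ?ip_ge0 //.
by rewrite ler_wsqrtr // ip_Cauchy_Schwarz.
Qed.

Lemma ipnormD_le x y : N (x + y) <= N x + N y.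
Proof.
rewrite -[N x + N y]ger0_norm ?addr_ge0 ?ipnorm_ge0 // -sqrtr_sqr.
rewrite ler_wsqrtr // ip_sqrD sqrrD !ipnorm_sqr.
by have := ip_le_ipnorm x y; lra.
Qed.

Lemma ipnorm_dist x y : `|N x - N y| <= N (x - y).
Proof.
rewrite ler_norml; have := ipnormD_le (x - y) y; have := ipnormD_le (y - x) x.
by rewrite !subrK -opprB ipnormN; lra.
Qed.

Lemma ipnorm_sum_le m (F : 'I_m -> V) : N (\sum_i F i) <= \sum_i N (F i).
Proof.
elim/big_rec2: _ => [|i y1 y2 _ h]; first by rewrite ipnorm0.
by rewrite (le_trans (ipnormD_le _ _)) // lerD2l.
Qed.

End InnerProduct.

(* By polarization. *)
Lemma ip_isometry (R : realType) (V W : lmodType R) (ipV : V -> V -> R)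
    (ipW : W -> W -> R) (f : V -> W) :
  inner_product ipV -> inner_product ipW ->
  (forall a x y, f (a *: x + y) = a *: f x + f y) ->
  (forall x, ipnorm ipW (f x) = ipnorm ipV x) ->
  forall x y, ipW (f x) (f y) = ipV x y.
Proof.
move=> ipVP ipWP flin fN x y.
have sqr z : ipW (f z) (f z) = ipV z z by rewrite -ipnorm_sqr // fN ipnorm_sqr.
have := sqr (x + y); rewrite -[x]scale1r flin !scale1r.
by rewrite (ip_sqrD ipWP) (ip_sqrD ipVP) !sqr; lra.
Qed.

Lemma lipschitz_continuous (R : realFieldType) (V W : normedModType R)
    (f : V -> W) (k : R) :
  (forall x y, `|f x - f y| <= k * `|x - y|) -> continuous f.
Proof.
move=> fk x; apply/cvgrPdist_lt => e e0.
have K0 : 0 < `|k| + 1 by rewrite ltr_wpDl.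
near=> y.
have xy : `|x - y| < e / (`|k| + 1).
  by near: y; apply: (@cvgr_dist_lt _ _ _ (nbhs x) _ id x cvg_id); rewrite divr_gt0.
rewrite (le_lt_trans (fk x y)) // (@le_lt_trans _ _ ((`|k| + 1) * `|x - y|)) //.
  by rewrite ler_wpM2r // (le_trans (ler_norm k)) // lerDl.
by rewrite -ltr_pdivlMl // mulrC.
Unshelve. all: by end_near.
Qed.

Lemma norm_le_bounded_set (R : realFieldType) (V : normedModType R) (A : set V) r :
  (forall p, A p -> `|p| <= r) -> bounded_set A.
Proof.
move=> Ar; rewrite /bounded_near /=; near=> M => p /Ar /le_trans; apply.
by near: M; apply: nbhs_pinfty_ge; exact: num_real.
Unshelve. all: by end_near.
Qed.

Lemma segment_continuous (R : numFieldType) (V : normedModType R) :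
  continuous (fun q : (V * V) * R => (1 - q.2) *: q.1.1 + q.2 *: q.1.2).
Proof.
move=> q; apply: cvgD; apply: cvgZ.
- by apply: cvgB; [exact: cvg_cst | exact: cvg_snd].
- exact: (cvg_comp _ _ cvg_fst cvg_fst).
- exact: cvg_snd.
- exact: (cvg_comp _ _ cvg_fst cvg_snd).
Qed.

Lemma entry_le_mx_norm (R : realType) n (p : 'rV[R]_n) i : `|p 0 i| <= `|p|.
Proof.
rewrite [`|p|]mx_normrE.
exact: (le_bigmax _ (fun ij : 'I_1 * 'I_n => `|p ij.1 ij.2|) (0, i)).
Qed.

Section RowVectorInnerProduct.
Variables (R : realType) (n : nat) (ip : 'rV[R]_n -> 'rV[R]_n -> R).
Hypothesis ipP : inner_product ip.
Local Notation N := (ipnorm ip).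

Lemma ipnorm_le_mx_norm : exists2 C, 0 <= C & forall p, N p <= C * `|p|.
Proof.
exists (\sum_j N (delta_mx 0 j)); first by apply: sumr_ge0 => j _; exact: ipnorm_ge0.
move=> p; rewrite {1}(matrix_sum_delta p) big_ord1 mulr_suml.
rewrite (le_trans (ipnorm_sum_le ipP _)) // ler_sum // => j _.
by rewrite ipnormZ // mulrC ler_wpM2l ?ipnorm_ge0 ?entry_le_mx_norm.
Qed.

Lemma ipnorm_continuous : continuous N.
Proof.
have [C _ NC] := ipnorm_le_mx_norm.
by apply: (lipschitz_continuous (k := C)) => p q; rewrite (le_trans (ipnorm_dist ipP _ _)).
Qed.

(* The minimum of [N] on the unit sphere of the max norm. *)
Lemma mx_norm_le_ipnorm : exists2 c, 0 < c & forall p, c * `|p| <= N p.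
Proof.
pose U := [set p : 'rV[R]_n | `|p| = 1].
have normalize p : p != 0 -> U (`|p|^-1 *: p).
  by move=> p0; rewrite /U /= normrZ normfV normr_id mulVf // normr_eq0.
have [[u Uu]|U0] := pselect (U !=set0); last first.
  exists 1 => // p; have [->|p0] := eqVneq p 0; first by rewrite normr0 mulr0 ipnorm_ge0.
  by case: U0; exists (`|p|^-1 *: p); apply: normalize.
have cU : compact U.
  apply: bounded_closed_compact; first by apply: (@norm_le_bounded_set _ _ _ 1) => p ->.
  have -> : U = (fun p => `|p|) @^-1` [set x | x = 1] by [].
  apply: preimage_closed; last exact: closed_eq.
  by move=> p _; apply: norm_continuous.
have [c Uc cmin] := EVT_min_rV (ex_intro _ u Uu) cU
  (continuous_subspaceT ipnorm_continuous).
rewrite inE in Uc; exists (N c).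
  rewrite lt_neqAle ipnorm_ge0 andbT eq_sym; apply/eqP => /(ipnorm_eq0 ipP) c0.
  by move: Uc; rewrite /U /= c0 normr0 => /eqP; rewrite eq_sym oner_eq0.
move=> p; have [->|p0] := eqVneq p 0; first by rewrite normr0 mulr0 ipnorm_ge0.
have := cmin _ (mem_set (normalize _ p0)); rewrite ipnormZ // normfV normr_id.
by rewrite -ler_pdivlMr ?normr_gt0 // mulrC.
Qed.

Lemma compact_level_set (f : 'rV[R]_n -> 'rV[R]_n) c :
  (forall p q, N (f p - f q) <= N (p - q)) -> (forall p, N (f p) = N p) ->
  compact [set p | f p = f c].
Proof.
move=> f_nonexp f_norm.
have [C _ NC] := ipnorm_le_mx_norm; have [k k0 kN] := mx_norm_le_ipnorm.
apply: bounded_closed_compact.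
  apply: (@norm_le_bounded_set _ _ _ (N (f c) / k)) => p /= fp.
  by rewrite ler_pdivlMr // mulrC -fp f_norm.
apply: (@preimage_closed _ _ f [set f c]); last first.
  by apply: accessible_closed_set1; apply: hausdorff_accessible; exact: norm_hausdorff.
move=> p _; apply: (lipschitz_continuous (k := C / k)) => {}p q.
rewrite mulrAC ler_pdivlMr // mulrC (le_trans (kN _)) //.
exact: le_trans (f_nonexp p q) (NC _).
Qed.

End RowVectorInnerProduct.

Definition snoc (T : Type) m (f : 'I_m -> T) (x : T) : 'I_m.+1 -> T :=
  fun i => if unlift ord_max i is Some k then f k else x.

Lemma snoc_widen (T : Type) m (f : 'I_m -> T) x i :
  snoc f x (widen_ord (leqnSn m) i) = f i.
Proof.
have -> : widen_ord (leqnSn m) i = lift ord_max i.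
  by apply: val_inj; rewrite /= /bump leqNgt ltn_ord.
by rewrite /snoc liftK.
Qed.

Lemma snoc_max (T : Type) m (f : 'I_m -> T) x : snoc f x ord_max = x.
Proof. by rewrite /snoc unlift_none. Qed.

Section ConvexCombination.
Variables (R : realFieldType) (V : lmodType R) (T : set V).

Definition conv_comb m p := exists (l : 'I_m -> R) (z : 'I_m -> V),
  [/\ (forall i, 0 <= l i), \sum_i l i = 1, (forall i, T (z i)) & p = \sum_i l i *: z i].

(* The hull of [j.+1] points of [T], built from [j] successive segments so
   that its compactness is evident. *)
Fixpoint conv_iter j : set V :=
  if j is j'.+1 then
    [set (1 - q.2) *: q.1.1 + q.2 *: q.1.2 | q in (conv_iter j' `*` T) `*` `[0, 1]]
  else T.

Lemma conv_iter_sub j x : T x -> conv_iter j x.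
Proof.
move=> Tx; elim: j => [|j IH] //=.
exists ((x, x), 0); last by rewrite subr0 scale1r scale0r addr0.
by split; [split | rewrite /= in_itv /= lexx ler01].
Qed.

Lemma conv_iter_segment j q y e : conv_iter j q -> T y -> 0 <= e <= 1 ->
  conv_iter j.+1 (q + e *: (y - q)).
Proof.
move=> jq Ty e01; exists ((q, y), e); first by split; [split | rewrite /= in_itv].
by rewrite /= scalerBl scale1r scalerBr addrCA addrC.
Qed.

Lemma conv_iter_comb j p : conv_iter j p -> conv_comb j.+1 p.
Proof.
elim: j p => [p Tp|j IH p].
  by exists (fun=> 1), (fun=> p); rewrite !big_ord1 scale1r.
case=> [[[a b] s] [[/= ja Tb] /=]]; rewrite in_itv /= => /andP[s0 s1] <-.
have [l [z [l0 l1 Tz ->]]] := IH _ ja.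
exists (snoc (fun k => (1 - s) * l k) s), (snoc z b); split.
- by move=> i; rewrite /snoc; case: unlift => // k; rewrite mulr_ge0 ?subr_ge0.
- rewrite big_ord_recr /= snoc_max; under eq_bigr do rewrite snoc_widen.
  by rewrite -mulr_sumr l1 mulr1 subrK.
- by move=> i; rewrite /snoc; case: unlift.
- rewrite [RHS]big_ord_recr /= !snoc_max.
  under [X in _ = X + _]eq_bigr do rewrite !snoc_widen.
  by rewrite scaler_sumr; congr (_ + _); apply: eq_bigr => i _; rewrite scalerA.
Qed.

Lemma conv_comb_iter j p : conv_comb j.+1 p -> conv_iter j p.
Proof.
elim: j p => [|j IH] p [l [z [l0 l1 Tz ->]]].
  by move: l1; rewrite !big_ord1 => ->; rewrite scale1r.
move: l1; rewrite big_ord_recr /= => l1.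
set s := l ord_max in l1 *; set w := widen_ord (leqnSn j.+1) in l1 *.
set S0 := \sum_(i < j.+1) l (w i) in l1.
have S0_ge0 : 0 <= S0 by apply: sumr_ge0 => i _; exact: l0.
rewrite big_ord_recr /= -/s.
have [S00|S0_neq0] := eqVneq S0 0.
  exists ((z ord_max, z ord_max), 1).
    split=> /=; last by rewrite in_itv /= ler01 lexx.
    by split; [exact: conv_iter_sub (Tz _) | exact: Tz].
  rewrite big1 => [|i _]; last by rewrite (psumr_eq0P (fun i _ => l0 _) S00) ?scale0r.
  by rewrite /= subrr scale0r !add0r (_ : s = 1) //; lra.
have S0_gt0 : 0 < S0 by rewrite lt_neqAle eq_sym S0_neq0.
pose a := \sum_(i < j.+1) (l (w i) / S0) *: z (w i).
have ja : conv_iter j a.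
  apply: IH; exists (fun i => l (w i) / S0), (fun i => z (w i)); split => //.
  - by move=> i; rewrite divr_ge0 // ltW.
  - by rewrite -mulr_suml -/S0 divff.
exists ((a, z ord_max), s).
  split=> /=; last by rewrite in_itv /= l0 /=; lra.
  by split; [exact: ja | exact: Tz].
rewrite /= scaler_sumr; congr (_ + _); apply: eq_bigr => i _.
by rewrite scalerA (_ : 1 - s = S0) 1?mulrC ?divfK //; lra.
Qed.

End ConvexCombination.

Lemma convex_conv_iter_sub (R : realFieldType) (V : lmodType R)
    (C : set (convex_lmodType V)) j :
  convex_set C -> conv_iter C j `<=` C.
Proof.
move=> cC; elim: j => [|j IH] //= x [[[a b] t] [[/= /IH Ca Cb]]].
rewrite /= in_itv /= => /andP[t0 t1] <-.
by move: (cC b a (Itv01 t0 t1)); rewrite !inE addrC; apply.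
Qed.

Lemma convex_set_sum (R : realFieldType) (V : lmodType R) (C : set (convex_lmodType V))
    c m (l : 'I_m -> R) (z : 'I_m -> V) :
  convex_set C -> C c -> (forall i, 0 <= l i) -> \sum_i l i = 1 ->
  (forall i, l i != 0 -> C (z i)) -> C (\sum_i l i *: z i).
Proof.
move=> cC Cc; case: m l z => [|m] l z l0 l1 Cz.
  by move: l1; rewrite big_ord0 => /eqP; rewrite eq_sym oner_eq0.
pose z' i := if l i == 0 then c else z i.
have -> : \sum_i l i *: z i = \sum_i l i *: z' i.
  by apply: eq_bigr => i _; rewrite /z'; case: eqP => // ->; rewrite !scale0r.
apply: (convex_conv_iter_sub cC); apply: conv_comb_iter; exists l, z'; split => // i.
by rewrite /z'; case: eqP => // /eqP; exact: Cz.
Qed.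

Lemma compact_conv_iter (R : realType) (V : normedModType R) (T : set V) j :
  compact T -> compact (conv_iter T j).
Proof.
move=> cT; elim: j => [|j IH] //=.
apply: continuous_compact; first exact/continuous_subspaceT/segment_continuous.
by apply: compact_setX; [exact: compact_setX | exact: segment_compact].
Qed.

Lemma affine_dependence (R : realFieldType) n (z : 'I_n.+2 -> 'rV[R]_n) :
  exists mu : 'I_n.+2 -> R,
    [/\ exists i, 0 < mu i, \sum_i mu i = 0 & \sum_i mu i *: z i = 0].
Proof.
pose w := widen_ord (leqnSn n.+1).
pose D : 'M[R]_(n.+1, n) := \matrix_i (z (w i) - z ord_max).
have /rowV0Pn[c /sub_kermxP cD c0] : kermx D != 0.
  by rewrite kermx_eq0 /row_free; apply: contraTneq (rank_leq_col D) => ->; rewrite ltnn.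
pose mu := snoc (c 0) (- \sum_i c 0 i).
have mu_sum : \sum_i mu i = 0.
  rewrite big_ord_recr /= /mu snoc_max.
  by under eq_bigr do rewrite snoc_widen; rewrite subrr.
exists mu; split=> //; last first.
  rewrite big_ord_recr /= /mu snoc_max; under eq_bigr do rewrite snoc_widen.
  rewrite -[RHS]cD mulmx_sum_row scaleNr scaler_suml -sumrB.
  by apply: eq_bigr => i _; rewrite rowK scalerBr.
apply: contrapT => /forallNP mu_le0.
have mu_eq0 i : mu i = 0.
  apply/eqP; rewrite -oppr_eq0; apply/eqP; move: i isT; apply/psumr_eq0P.
    by move=> i _; rewrite oppr_ge0 leNgt; apply/negP; exact: mu_le0.
  by rewrite sumrN mu_sum oppr0.
move/eqP: c0; apply; apply/rowP => j.
by rewrite mxE -(mu_eq0 (w j)) /mu snoc_widen.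
Qed.

Lemma Caratheodory (R : realFieldType) n (T : set 'rV[R]_n) p :
  conv_comb T n.+2 p -> conv_comb T n.+1 p.
Proof.
move=> [l [z [l_ge0 l_sum Tz ->]]].
have [mu [[i1 mu_i1] mu_sum mu_z]] := affine_dependence z.
have [i0 mu_i0 i0_min] : exists2 i0, 0 < mu i0 &
    forall i, 0 < mu i -> l i0 / mu i0 <= l i / mu i.
  have [i mu_i i_min] := @arg_minP _ _ _ i1 (fun i => 0 < mu i) (fun i => l i / mu i) mu_i1.
  by exists i.
pose l' i := l i - l i0 / mu i0 * mu i.
have l'_ge0 i : 0 <= l' i.
  rewrite subr_ge0; have [mu_i|] := ltP 0 (mu i).
    by rewrite -ler_pdivlMr // i0_min.
  by move=> /(mulr_ge0_le0 (divr_ge0 (l_ge0 i0) (ltW mu_i0)))/le_trans; apply.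
have l'_i0 : l' i0 = 0 by rewrite /l' divfK ?subrr // gt_eqF.
have l'_sum : \sum_i l' i = 1 by rewrite sumrB -mulr_sumr mu_sum mulr0 subr0.
have l'_z : \sum_i l' i *: z i = \sum_i l i *: z i.
  under eq_bigr do rewrite /l' scalerBl -scalerA.
  by rewrite sumrB -scaler_sumr mu_z scaler0 subr0.
exists (fun i => l' (lift i0 i)), (fun i => z (lift i0 i)); split => //.
- by move: l'_sum; rewrite (bigD1_ord i0) //= l'_i0 add0r.
- by rewrite -l'_z (bigD1_ord i0) //= l'_i0 scale0r add0r.
Qed.

(* If [v] is not strictly separated from [T] by any hyperplane, it lies in the
   hull of [T]: otherwise moving from the point of the hull nearest to [v]
   towards a suitable point of [T] would get closer to [v]. *)
Lemma conv_comb_of_support (R : realType) n (ip : 'rV[R]_n -> 'rV[R]_n -> R)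
    (T : set 'rV[R]_n) v :
  inner_product ip -> compact T ->
  (forall w, exists2 y, T y & ip v w <= ip y w) -> conv_comb T n.+1 v.
Proof.
move=> ipP cT supT.
have [y0 Ty0 _] := supT 0.
have dist_cont : continuous (fun q : 'rV[R]_n => ipnorm ip (v - q)).
  have [C _ NC] := ipnorm_le_mx_norm ipP.
  apply: (lipschitz_continuous (k := C)) => p q.
  by rewrite (le_trans (ipnorm_dist ipP _ _)) // addrC opprB addrA subrK -opprB ipnormN.
have [q] := EVT_min_rV (A := conv_iter T n) (ex_intro _ _ (conv_iter_sub n Ty0))
  (compact_conv_iter (j := n) cT) (continuous_subspaceT dist_cont).
move=> /set_mem Kq q_min; apply: conv_iter_comb.
have [<-//|vq] := eqVneq q v.
have [y Ty vy] := supT (v - q).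
have wd : 0 < ip (v - q) (v - q) <= ip (v - q) (y - q).
  by rewrite ip_gt0 ?subr_eq0 1?eq_sym //= [ip _ (y - q)](ipC ipP) !(ipBl ipP) lerD2r.
have [e e01 closer] := ip_descent ipP wd.
have Kq' : conv_iter T n (q + e *: (y - q)).
  apply/conv_comb_iter/Caratheodory/conv_iter_comb/conv_iter_segment => //.
  by case/andP: e01 => /ltW -> ->.
have := q_min _ (mem_set Kq'); rewrite leNgt => /negP[].
by rewrite /ipnorm ltr_sqrt ?ip_gt0 ?subr_eq0 1?eq_sym // opprD addrA.
Qed.

Lemma conv_lmodE (R : numDomainType) (E : lmodType R) (x y : convex_lmodType E)
    (t : {i01 R}) :
  x <| t |> y = t%:num *: (x : E) + (1 - t%:num) *: (y : E).
Proof. by []. Qed.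

Lemma inner_product_r2v (R : realType) (V : vectType R) (ip : V -> V -> R) :
  inner_product ip -> inner_product (fun p q => ip (r2v p) (r2v q)).
Proof.
move=> ipP; split=> [p q|a p q z|p|p].
- exact: ipC.
- by rewrite linearP ipPl.
- exact: ip_ge0.
- by move=> pp; apply: r2v_inj; rewrite linear0; apply: (ip_le0 ipP); rewrite pp.
Qed.

Lemma ArgminP (R : realType) (T : Type) (h : T -> \bar R) z :
  Argmin h z <-> (ereal_inf (range h) < +oo)%E /\ h z = ereal_inf (range h).
Proof. by rewrite /Argmin; case: ifP => //= _; split => // -[]. Qed.

Lemma convex_comb_eq_ub (R : realFieldType) m (l a : 'I_m -> R) b :
  (forall i, 0 <= l i) -> \sum_i l i = 1 -> (forall i, a i <= b) ->
  \sum_i l i * a i = b -> forall i, l i != 0 -> a i = b.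
Proof.
move=> l0 l1 ab lab i li.
have d0 j : 0 <= l j * (b - a j) by rewrite mulr_ge0 ?subr_ge0.
have : \sum_j l j * (b - a j) = 0.
  by under eq_bigr do rewrite mulrBr; rewrite sumrB -mulr_suml l1 mul1r lab subrr.
move=> /psumr_eq0P /(_ i isT) /eqP; rewrite mulf_eq0 (negbTE li) subr_eq0.
by move=> /(_ (fun j _ => d0 j)) /eqP.
Qed.

Section SpectralDecompositionSystem.
Variables (R : realType) (H X : vectType R) (ipH : H -> H -> R) (ipX : X -> X -> R).
Variables (S : Type) (mul : S -> S -> S) (one : S) (inv : S -> S) (act : S -> X -> X).
Variables (gamma : H -> X) (A : Type) (Lambda : A -> {linear X -> H}) (tau : X -> X).
Hypotheses (ipHP : inner_product ipH) (ipXP : inner_product ipX).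
Hypotheses (mulVg : forall s, mul (inv s) s = one /\ mul s (inv s) = one)
  (act1 : forall x, act one x = x)
  (actM : forall s t x, act (mul s t) x = act s (act t x))
  (act_linear : forall s a x y, act s (a *: x + y) = a *: act s x + act s y)
  (act_ipnorm : forall s x, ipnorm ipX (act s x) = ipnorm ipX x).
Hypotheses (Lambda_ipnorm : forall a x, ipnorm ipH (Lambda a x) = ipnorm ipX x)
  (tau_invariant : S_invariant act tau)
  (tau_orbit : forall x, Defs.orbit act x (tau x))
  (gamma_Lambda : forall a x, gamma (Lambda a x) = tau x)
  (Lambda_gamma : forall Z, exists a, Z = Lambda a (gamma Z))
  (ip_le_gamma : forall Z W, ipH Z W <= ipX (gamma Z) (gamma W)).

Lemma ip_Lambda a x y : ipH (Lambda a x) (Lambda a y) = ipX x y.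
Proof. by apply: ip_isometry => // b u v; rewrite linearP. Qed.

Lemma Lambda_inj a : injective (Lambda a).
Proof.
move=> x y xy; apply/eqP; rewrite -subr_eq0; apply/eqP/(ip_le0 ipXP).
by rewrite -(ip_Lambda a) linearB /= xy subrr ip0l.
Qed.

Lemma ip_act s x y : ipX (act s x) (act s y) = ipX x y.
Proof. exact: (ip_isometry ipXP ipXP (act_linear s) (act_ipnorm s)). Qed.

Lemma actK s x : act (inv s) (act s x) = x.
Proof. by rewrite -actM (mulVg s).1 act1. Qed.

Lemma actKV s x : act s (act (inv s) x) = x.
Proof. by rewrite -actM (mulVg s).2 act1. Qed.

Lemma tau_act x : exists s, tau x = act s x.
Proof. by have [s _ <-] := tau_orbit x; exists s. Qed.

Lemma orbit_tau_eq x z : tau z = tau x -> Defs.orbit act x z.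
Proof.
have [a ->] := tau_act z; have [b ->] := tau_act x => ab.
by exists (mul (inv a) b) => //; rewrite actM -ab actK.
Qed.

Lemma tau_gamma Z : tau (gamma Z) = gamma Z.
Proof. by have [a aZ] := Lambda_gamma Z; rewrite -(gamma_Lambda a) -aZ. Qed.

Lemma ip_le_tau u v : ipX u v <= ipX (tau u) (tau v).
Proof. by have [a _] := Lambda_gamma 0; rewrite -(ip_Lambda a) -!(gamma_Lambda a). Qed.

Lemma ip_gamma Z : ipX (gamma Z) (gamma Z) = ipH Z Z.
Proof. by have [a aZ] := Lambda_gamma Z; rewrite [in RHS]aZ ip_Lambda. Qed.

Lemma ip_tau x : ipX (tau x) (tau x) = ipX x x.
Proof. by have [s ->] := tau_act x; rewrite ip_act. Qed.

Lemma tau_nonexpansive u v : ipX (tau u - tau v) (tau u - tau v) <= ipX (u - v) (u - v).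
Proof. by rewrite !(ip_sqrB ipXP) !ip_tau; have := ip_le_tau u v; lra. Qed.

(* Equality in [D] forces a simultaneous decomposition: expanding
   [Z + W = Lambda a (gamma Z + gamma W)] shows that [Z - Lambda a (gamma Z)]
   has nonpositive norm. *)
Lemma simultaneous_decomposition Z W : ipH Z W = ipX (gamma Z) (gamma W) ->
  exists a, Z = Lambda a (gamma Z) /\ W = Lambda a (gamma W).
Proof.
move=> ZW; have [a aZW] := Lambda_gamma (Z + W).
set U := Lambda a (gamma Z); set V := Lambda a (gamma W).
have ZW_UV : Z + W = U + V.
  apply/eqP; rewrite -subr_eq0; apply/eqP/(ip_le0 ipHP); rewrite (ip_sqrB ipHP).
  have -> : ipH (U + V) (U + V) = ipH (Z + W) (Z + W).
    by rewrite -linearD ip_Lambda (ip_sqrD ipXP) (ip_sqrD ipHP) !ip_gamma ZW.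
  have -> : ipH (Z + W) (U + V) = ipX (gamma (Z + W)) (gamma Z + gamma W).
    by rewrite {1}aZW -linearD ip_Lambda.
  have := ip_le_gamma (Z + W) Z; have := ip_le_gamma (Z + W) W.
  by rewrite (ipDr ipXP) !(ipDr ipHP); lra.
have ZU : Z - U = V - W.
  by apply/eqP; rewrite subr_eq addrAC eq_sym subr_eq ZW_UV addrC.
have UZ : Z = U.
  apply/eqP; rewrite -subr_eq0; apply/eqP/(ip_le0 ipHP).
  rewrite {2}ZU (ipBl ipHP) !(ipBr ipHP) ip_Lambda.
  have := ip_le_gamma Z V; have := ip_le_gamma U W.
  by rewrite /U /V !gamma_Lambda !tau_gamma; lra.
by exists a; split=> //; move/eqP: ZU; rewrite -UZ subrr eq_sym subr_eq0 => /eqP.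
Qed.

Definition majorizes x u := forall w, ipX u w <= ipX x (tau w).

Lemma majorizes_gamma Z : majorizes (gamma Z) (gamma Z).
Proof. by move=> w; rewrite -{2}tau_gamma ip_le_tau. Qed.

Lemma majorizes_comb t x1 x2 u1 u2 : 0 <= t <= 1 ->
  majorizes x1 u1 -> majorizes x2 u2 ->
  majorizes (t *: x1 + (1 - t) *: x2) (t *: u1 + (1 - t) *: u2).
Proof.
move=> /andP[t0 t1] xu1 xu2 w; rewrite !(ipDl ipXP) !(ipZl ipXP).
by rewrite lerD // ler_wpM2l ?subr_ge0.
Qed.

Lemma majorizes_act s x u : majorizes x u -> majorizes x (act s u).
Proof.
move=> xu w; rewrite -{1}[w](actKV s) ip_act (le_trans (xu _)) //.
by rewrite tau_invariant.
Qed.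

Lemma majorizes_gamma_comb t Z1 Z2 : 0 <= t <= 1 ->
  majorizes (t *: gamma Z1 + (1 - t) *: gamma Z2) (gamma (t *: Z1 + (1 - t) *: Z2)).
Proof.
move=> /andP[t0 t1] w; have [c cZ] := Lambda_gamma (t *: Z1 + (1 - t) *: Z2).
rewrite -(ip_Lambda c) -cZ !(ipDl ipHP) !(ipZl ipHP) !(ipDl ipXP) !(ipZl ipXP).
by rewrite lerD // ler_wpM2l ?subr_ge0 // -(gamma_Lambda c) ip_le_gamma.
Qed.

(* Transported to coordinates, the orbit of [x] is a compact level set of
   [tau], and majorization says that no hyperplane separates [u] from it. *)
Lemma conv_orbit_of_majorizes x u :
  majorizes x u -> conv_comb (Defs.orbit act x) (dim X).+1 u.
Proof.
move=> xu; pose B p q := ipX (r2v p) (r2v q); have BP := inner_product_r2v ipXP.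
pose tau' p := v2r (tau (r2v p)).
have cT : compact [set p | tau' p = tau' (v2r x)].
  apply: (compact_level_set BP) => [p q|p].
    by rewrite /ipnorm /B /tau' -!linearB !v2rK ler_wsqrtr // linearB tau_nonexpansive.
  by rewrite /ipnorm /B /tau' v2rK ip_tau.
have [|l [z [l0 l1 Tz uz]]] := conv_comb_of_support (v := v2r u) BP cT.
  move=> w; have [s tw] := tau_act (r2v w).
  exists (v2r (act (inv s) x)); first by rewrite /tau' /= !v2rK tau_invariant.
  by rewrite /B !v2rK (le_trans (xu _)) // tw -(ip_act s (act (inv s) x)) actKV.
exists l, (r2v \o z); split=> // [i|].
  by apply: orbit_tau_eq; apply: v2r_inj; have := Tz i; rewrite /= /tau' v2rK.
by rewrite -[u]v2rK uz linear_sum; apply: eq_bigr => i _; rewrite linearZ.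
Qed.

Section Minimizers.
Variables (phi : X -> \bar R) (Y : H).
Hypotheses (phi_neq_ninfty : forall x, phi x != -oo%E)
  (phi_invariant : S_invariant act phi).

Let objH Z := (phi (gamma Z) - (ipH Z Y)%:E)%E.
Let objX x := (phi x - (ipX x (gamma Y))%:E)%E.

Lemma phi_tau x : phi (tau x) = phi x.
Proof. by have [s ->] := tau_act x; rewrite phi_invariant. Qed.

Lemma objH_Lambda b x : A_of gamma Lambda Y b -> objH (Lambda b x) = objX x.
Proof. by move=> bY; rewrite /objH /objX gamma_Lambda phi_tau {1}bY ip_Lambda. Qed.

Lemma objX_gamma_le Z : (objX (gamma Z) <= objH Z)%E.
Proof. by rewrite leeB // lee_fin. Qed.

Lemma ereal_inf_objH : ereal_inf (range objH) = ereal_inf (range objX).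
Proof.
apply/eqP; rewrite eq_le; apply/andP; split.
  have [b bY] := Lambda_gamma Y.
  apply: le_ereal_inf_tmp => _ [x _ <-]; rewrite -(objH_Lambda x bY).
  by apply: ereal_inf_lbound; exists (Lambda b x).
apply: le_ereal_inf_tmp => _ [Z _ <-]; apply: le_trans (objX_gamma_le Z).
by apply: ereal_inf_lbound; exists (gamma Z).
Qed.

Lemma Argmin_objH_Lambda x b : A_of gamma Lambda Y b ->
  Argmin objH (Lambda b x) <-> Argmin objX x.
Proof. by move=> bY; rewrite !ArgminP ereal_inf_objH objH_Lambda. Qed.

Lemma Argmin_objH_gamma Z : Argmin objH Z ->
  Argmin objX (gamma Z) /\ ipH Z Y = ipX (gamma Z) (gamma Y).
Proof.
move=> /ArgminP[inf_lt ZM]; rewrite ereal_inf_objH in inf_lt ZM.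
have objXZ : objX (gamma Z) = objH Z.
  apply/eqP; rewrite eq_le objX_gamma_le ZM.
  by apply: ereal_inf_lbound; exists (gamma Z).
split; first by apply/ArgminP; rewrite objXZ.
move: objXZ ZM inf_lt (phi_neq_ninfty (gamma Z)); rewrite /objH /objX.
case: (phi (gamma Z)) => [r| |] //=.
- by move=> /eqP; rewrite eqe => /eqP; lra.
- by move=> _ <-.
Qed.

Lemma Argmin_objHP Z : Argmin objH Z <->
  Argmin objX (gamma Z) /\ exists a, Z = Lambda a (gamma Z) /\ Y = Lambda a (gamma Y).
Proof.
split=> [/Argmin_objH_gamma[ZM ZY]|[ZM [a [aZ aY]]]].
  by split=> //; exact: simultaneous_decomposition.
by rewrite aZ; apply/(Argmin_objH_Lambda _ aY).
Qed.

Lemma Argmin_objHE : Argmin objH =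
  [set Z | exists x b, [/\ Argmin objX x, A_of gamma Lambda Y b & Z = Lambda b x]].
Proof.
apply/seteqP; split=> [Z /Argmin_objHP[ZM [a [aZ aY]]]|_ [x [b [xM bY ->]]]].
  by exists (gamma Z), a.
exact/(Argmin_objH_Lambda _ bY).
Qed.

Lemma Argmin_objX_act x s : Argmin objX x ->
  ipX (act s x) (gamma Y) = ipX x (gamma Y) -> Argmin objX (act s x).
Proof. by rewrite !ArgminP /objX phi_invariant => + ->. Qed.

Lemma convex_Argmin_objX : convex_set (Argmin objH : set (convex_lmodType H)) ->
  convex_set (Argmin objX : set (convex_lmodType X)).
Proof.
move=> cMH x1 x2 t; rewrite !in_setE => x1M x2M; have [b bY] := Lambda_gamma Y.
have := cMH (Lambda b x1) (Lambda b x2) t.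
by rewrite !in_setE !conv_lmodE -!linearZ -linearD !(Argmin_objH_Lambda _ bY); apply.
Qed.

Lemma convex_Argmin_objH : convex_set (Argmin objX : set (convex_lmodType X)) ->
  convex_set (Argmin objH : set (convex_lmodType H)).
Proof.
move=> cMX Z1 Z2 t; rewrite !in_setE conv_lmodE.
move=> /Argmin_objH_gamma[M1 Z1Y] /Argmin_objH_gamma[M2 Z2Y].
have t01 : 0 <= t%:num <= 1 by rewrite ge0 le1.
set Z := t%:num *: Z1 + _; set x := t%:num *: gamma Z1 + (1 - t%:num) *: gamma Z2.
have xM : Argmin objX x by have := cMX (gamma Z1) (gamma Z2) t; rewrite !in_setE; apply.
have x_maj_Z : majorizes x (gamma Z) := majorizes_gamma_comb _ _ t01.
have x_maj_orbit s : majorizes x (act s x).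
  by apply/majorizes_act/majorizes_comb => //; exact: majorizes_gamma.
have ZY : ipH Z Y = ipX x (gamma Y).
  by rewrite !(ipDl ipHP) !(ipZl ipHP) !(ipDl ipXP) !(ipZl ipXP) Z1Y Z2Y.
have ZY' : ipH Z Y = ipX (gamma Z) (gamma Y).
  by have := ip_le_gamma Z Y; have := x_maj_Z (gamma Y); rewrite tau_gamma; lra.
apply/Argmin_objHP; split; last exact: simultaneous_decomposition.
have [l [z [l0 l1 z_orbit gZ]]] := conv_orbit_of_majorizes x_maj_Z.
rewrite gZ; apply: (convex_set_sum cMX xM l0 l1) => i li.
have [s _ sz] := z_orbit i; rewrite -sz; apply: Argmin_objX_act xM _; rewrite sz.
apply: (convex_comb_eq_ub (a := fun i => ipX (z i) (gamma Y)) l0 l1 _ _ li).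
  move=> j; have [s' _ <-] := z_orbit j.
  by have := x_maj_orbit s' (gamma Y); rewrite tau_gamma.
by rewrite -ZY ZY' gZ (ip_suml ipXP); apply: eq_bigr => j _; rewrite (ipZl ipXP).
Qed.

Lemma is_singleton_Argmin : is_singleton (Argmin objH) <-> is_singleton (Argmin objX).
Proof.
have [b bY] := Lambda_gamma Y.
split=> [[Z0 MH]|[x0 MX]].
  have /Argmin_objH_gamma[gZ0M _] : Argmin objH Z0 by rewrite MH.
  exists (gamma Z0); apply/seteqP; split=> [x xM|_ ->] //=.
  apply: (@Lambda_inj b).
  have := Argmin_objH_Lambda x bY; have := Argmin_objH_Lambda (gamma Z0) bY.
  by rewrite MH /= => -[_ ->] // [_ ->].
have cMH : convex_set (Argmin objH : set (convex_lmodType H)).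
  apply: convex_Argmin_objH => u v t; rewrite MX !in_setE /= => -> ->.
  by rewrite conv_lmodE -scalerDl addrC subrK scale1r.
have MH_norm Z : Argmin objH Z -> ipH Z Z = ipX x0 x0.
  by move=> /Argmin_objH_gamma[+ _]; rewrite MX /= => <-; rewrite ip_gamma.
have L0M : Argmin objH (Lambda b x0) by apply/(Argmin_objH_Lambda _ bY); rewrite MX.
exists (Lambda b x0); apply/seteqP; split=> [Z ZM|_ ->] //=.
have half_ge0 : (0 : R) <= 2^-1 by lra.
have half_le1 : (2^-1 : R) <= 1 by lra.
have := cMH Z (Lambda b x0) (Itv01 half_ge0 half_le1).
rewrite !in_setE conv_lmodE /= (_ : 1 - 2^-1 = 2^-1 :> R); last by field.
rewrite -scalerDr => /(_ ZM L0M) /MH_norm midM.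
by apply: (ip_midpoint_eq ipHP); rewrite ?midM (MH_norm _ ZM) ?(MH_norm _ L0M).
Qed.

End Minimizers.

End SpectralDecompositionSystem.

Unset Implicit Arguments.

Theorem theorem5p1 (R : realType) (H X : vectType R)
  (ipH : H -> H -> R) (ipX : X -> X -> R)
  (S : Type) (mul : S -> S -> S) (one : S) (inv : S -> S) (act : S -> X -> X)
  (gamma : H -> X) (A : Type) (Lambda : A -> {linear X -> H})
  (phi : X -> \bar R) (Y : H) :
  inner_product ipH -> inner_product ipX ->
  group_action_by_linear_isometries ipX mul one inv act ->
  spectral_decomposition_system ipH ipX act gamma Lambda ->
  proper_fun phi -> S_invariant act phi ->
  let MM := Argmin (fun Z : H => (phi (gamma Z) - (ipH Z Y)%:E)%E) in
  let M := Argmin (fun x : X => (phi x - (ipX x (gamma Y))%:E)%E) in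
  [/\ ereal_inf (range (fun Z : H => (phi (gamma Z) - (ipH Z Y)%:E)%E))
      = ereal_inf (range (fun x : X => (phi x - (ipX x (gamma Y))%:E)%E)),
    (forall Z : H, MM Z <->
       (M (gamma Z) /\ exists a, Z = Lambda a (gamma Z) /\ Y = Lambda a (gamma Y))),
    (forall (x : X) (b : A), A_of gamma Lambda Y b -> (MM (Lambda b x) <-> M x)),
    MM = [set Z | exists x b, [/\ M x, A_of gamma Lambda Y b & Z = Lambda b x]] &
    ((convex_set (MM : set (convex_lmodType H)) <-> convex_set (M : set (convex_lmodType X))) /\
    (is_singleton MM <-> is_singleton M))].
Proof.
move=> ipHP ipXP [[_ _ mulVg] [act1 actM act_linear act_ipnorm]].
move=> [Lambda_ipnorm [tau [tau_invariant tau_orbit gamma_Lambda]] Lambda_gamma ip_le_gamma].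
move=> [phi_neq_ninfty _] phi_invariant MM M.
split.
- exact: ereal_inf_objH.
- exact: Argmin_objHP.
- by move=> x b; apply: Argmin_objH_Lambda.
- exact: Argmin_objHE.
- split; last exact: is_singleton_Argmin.
  by split; [apply: convex_Argmin_objX | apply: convex_Argmin_objH].
Qed.
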